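(* Let $p\ge0$ be a fixed integer. Let $V:S^1\to\mathbb{R}$ be of class $C^{k-1,1}(S^1)$ with $k\ge 2p+1$, let $\phi(\theta)=e^{-V(\theta)}$, and let $\pi_n$ be the monic degree-$n$ orthogonal polynomial with respect to $\phi$ on the unit circle. Then \[ \lim_{n\to\infty}\frac{1}{n^p}\cdot\frac{\|\pi_n^{(p)}\|_\phi}{\|\pi_n\|_\phi}=1. \]
   Context: $C^{k-1,1}(S^1)$ denotes functions on the circle whose $2\pi$-periodic extension has $k-1$ Lipschitz continuous derivatives. The inner product is $\langle f,g\rangle_\phi=\frac{1}{2\pi}\int_{-\pi}^{\pi}f(e^{i\theta})\overline{g(e^{i\theta})}\phi(\theta)\,d\theta$, $\|f\|_\phi=\langle f,f\rangle_\phi^{1/2}$, and $\pi_n$ is the monic degree-$n$ polynomial orthogonal to all polynomials of lower degree; $\pi_n^{(p)}$ is its $p$-th derivative. *)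

From Stdlib Require Import Reals.
From Coquelicot Require Import Coquelicot.
From mathcomp Require Import all_boot all_algebra.
From mathcomp Require Import Rstruct.
From mathcomp.real_closed Require Import complex.

Set Implicit Arguments.
Unset Strict Implicit.
Unset Printing Implicit Defensive.

Definition eit (t : R) : R[i] := Complex (cos t) (sin t).

Definition cconj (z : R[i]) : R[i] := Complex (complex.Re z) (Ropp (complex.Im z)).

(** Real and imaginary parts of
    <f,g>_phi = 1/(2pi) int_{-pi}^{pi} f(e^{it}) conj(g(e^{it})) phi(t) dt. *)
Definition inner_re (phi : R -> R) (f g : {poly R[i]}) : R :=
  Rdiv (RInt (fun t => Rmult (complex.Re (GRing.mul (horner f (eit t)) (cconj (horner g (eit t))))) (phi t))
         (Ropp PI) PI) (Rmult 2 PI).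
Definition inner_im (phi : R -> R) (f g : {poly R[i]}) : R :=
  Rdiv (RInt (fun t => Rmult (complex.Im (GRing.mul (horner f (eit t)) (cconj (horner g (eit t))))) (phi t))
         (Ropp PI) PI) (Rmult 2 PI).

(** ||f||_phi = <f,f>_phi^{1/2} (note <f,f>_phi is real). *)
Definition wnorm (phi : R -> R) (f : {poly R[i]}) : R := sqrt (inner_re phi f f).

Definition monic_OP (phi : R -> R) (n : nat) (P : {poly R[i]}) : Prop :=
  P \is monic /\ size P = n.+1 /\
  (forall Q : {poly R[i]}, (size Q <= n)%N ->
     inner_re phi P Q = 0%R /\ inner_im phi P Q = 0%R).

(** V : R -> R is the 2pi-periodic extension of a function in C^{k-1,1}(S^1):
    V is 2pi-periodic, (k-1) times differentiable on R, and its (k-1)-th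
    derivative is Lipschitz continuous. *)
Definition C_lip_periodic (k : nat) (V : R -> R) : Prop :=
  (forall x, V (Rplus x (Rmult 2 PI)) = V x) /\
  (forall j x, (1 <= j)%N -> (j <= k.-1)%N -> ex_derive_n V j x) /\
  (exists L : R, forall x y,
     Rle (Rabs (Rminus (Derive_n V k.-1 x) (Derive_n V k.-1 y))) (Rmult L (Rabs (Rminus x y)))).

(* Multiplication by z^p is an isometry of L^2(phi) on the circle, so
   ||pi_n^(p)|| = ||z^p pi_n^(p)||, and if pi_n = sum_i c_i z^i then
   z^p pi_n^(p) - n^_p pi_n = sum_i (i^_p - n^_p) c_i z^i, where
   n (n^_p - i^_p) <= p n^p (n - i).  As phi = e^(-V) lies between two positive
   constants, Parseval and the reverse triangle inequality bound the distance
   between n^(-p) ||pi_n^(p)|| / ||pi_n|| and n^_p / n^p -> 1 by a constant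
   times sqrt (s_n) / n, where s_n = sum_i (n - i)^2 |c_i|^2.  To see that
   s_n = o(n^2), write pi_n = z^(n-N) pi_N - D with deg D < n: orthogonality
   gives ||pi_N||^2 = ||pi_n||^2 + ||D||^2, so D is small once the decreasing
   sequence ||pi_n||^2 has settled, while the coefficients of z^(n-N) pi_N sit
   within distance N of the top degree. *)

From Stdlib Require Import Reals Lia.
From Coquelicot Require Import Coquelicot.
From mathcomp Require Import all_boot all_order all_algebra.
From mathcomp Require Import Rstruct.
From mathcomp.real_closed Require Import complex.
From mathcomp Require Import ring lra.

Set Implicit Arguments.
Unset Strict Implicit.
Unset Printing Implicit Defensive.

Import Order.TTheory GRing.Theory Num.Theory.
Local Open Scope complex_scope.
Local Open Scope ring_scope.

Local Notation cRe := complex.Re.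
Local Notation cIm := complex.Im.

Lemma cReD (x y : R[i]) : cRe (x + y) = cRe x + cRe y. Proof. by case: x; case: y. Qed.
Lemma cImD (x y : R[i]) : cIm (x + y) = cIm x + cIm y. Proof. by case: x; case: y. Qed.

Lemma cReM (x y : R[i]) : cRe (x * y) = cRe x * cRe y - cIm x * cIm y.
Proof. by case: x; case: y. Qed.

Lemma cImM (x y : R[i]) : cIm (x * y) = cRe x * cIm y + cIm x * cRe y.
Proof. by case: x; case: y. Qed.

Lemma cReJ (x : R[i]) : cRe (conjc x) = cRe x. Proof. by case: x. Qed.
Lemma cImJ (x : R[i]) : cIm (conjc x) = - cIm x. Proof. by case: x. Qed.

Lemma cconjE (x : R[i]) : cconj x = conjc x. Proof. by case: x. Qed.

Lemma eitD (s t : R) : eit s * eit t = eit (s + t).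
Proof. by rewrite /eit /= cosD sinD; congr Complex; ring. Qed.

Lemma eit0 : eit 0 = 1.
Proof. by rewrite /eit cos_0 sin_0. Qed.

Lemma eitJ (t : R) : conjc (eit t) = eit (- t).
Proof. by rewrite /eit /= -RoppE cos_neg sin_neg. Qed.

Lemma eitX (t : R) (n : nat) : eit t ^+ n = eit (n%:R * t).
Proof.
elim: n => [|n IH]; first by rewrite expr0 -eit0; congr eit; rewrite RmultE mulr0n mul0r.
by rewrite exprS IH eitD; congr eit; rewrite !RmultE RplusE mulrSr; ring.
Qed.

Lemma eit_mulJ (t : R) : eit t * conjc (eit t) = 1.
Proof. by rewrite eitJ eitD Rplus_opp_r eit0. Qed.

Lemma continuity_ext (f g : R -> R) :
  (forall t, f t = g t) -> continuity f -> continuity g.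
Proof. by move=> e fc x; apply: (continuity_pt_locally_ext _ _ 1 x Rlt_0_1 (fun y _ => e y)). Qed.

Definition ccontinuity (h : R -> R[i]) :=
  continuity (fun t => cRe (h t)) /\ continuity (fun t => cIm (h t)).

Lemma ccontinuity_ext (h1 h2 : R -> R[i]) :
  (forall t, h1 t = h2 t) -> ccontinuity h1 -> ccontinuity h2.
Proof.
move=> e [c1 c2].
by split; [apply: (continuity_ext _ c1) | apply: (continuity_ext _ c2)] => t; rewrite e.
Qed.

Lemma ccontinuity_cst (c : R[i]) : ccontinuity (fun _ => c).
Proof. by split; apply: continuity_const. Qed.

Lemma ccontinuityD (h1 h2 : R -> R[i]) :
  ccontinuity h1 -> ccontinuity h2 -> ccontinuity (fun t => h1 t + h2 t).
Proof.
move=> [? ?] [? ?]; split.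
  apply: (@continuity_ext (fun t => cRe (h1 t) + cRe (h2 t))); last exact: continuity_plus.
  by move=> t; rewrite cReD.
apply: (@continuity_ext (fun t => cIm (h1 t) + cIm (h2 t))); last exact: continuity_plus.
by move=> t; rewrite cImD.
Qed.

Lemma ccontinuityM (h1 h2 : R -> R[i]) :
  ccontinuity h1 -> ccontinuity h2 -> ccontinuity (fun t => h1 t * h2 t).
Proof.
move=> [? ?] [? ?]; split.
  apply: (@continuity_ext (fun t => cRe (h1 t) * cRe (h2 t) - cIm (h1 t) * cIm (h2 t))).
    by move=> t; rewrite cReM.
  by apply: continuity_minus; apply: continuity_mult.
apply: (@continuity_ext (fun t => cRe (h1 t) * cIm (h2 t) + cIm (h1 t) * cRe (h2 t))).
  by move=> t; rewrite cImM.
by apply: continuity_plus; apply: continuity_mult.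
Qed.

Lemma ccontinuityJ (h : R -> R[i]) : ccontinuity h -> ccontinuity (fun t => conjc (h t)).
Proof.
move=> [? ?]; split.
  by apply: (@continuity_ext (fun t => cRe (h t))) => // t; rewrite cReJ.
apply: (@continuity_ext (fun t => - cIm (h t))); last exact: continuity_opp.
by move=> t; rewrite cImJ.
Qed.

Lemma ccontinuity_horner (P : {poly R[i]}) : ccontinuity (fun t => P.[eit t]).
Proof.
elim/poly_ind: P => [|P c IH].
  by apply: (ccontinuity_ext (h1 := fun _ => 0)) => [t|]; [rewrite horner0 | apply: ccontinuity_cst].
apply: (ccontinuity_ext (h1 := fun t => P.[eit t] * eit t + c)) => [t|].
  by rewrite hornerMXaddC.
apply: ccontinuityD (ccontinuity_cst c); apply: ccontinuityM => //.
by split; [apply: continuity_cos | apply: continuity_sin].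
Qed.

Section WeightedMean.
Variable phi : R -> R.
Hypothesis phi_cont : continuity phi.

Definition wmean (f : R -> R) : R :=
  Rdiv (RInt (fun t => Rmult (f t) (phi t)) (Ropp PI) PI) (Rmult 2 PI).

Lemma ex_RInt_weighted (f : R -> R) :
  continuity f -> ex_RInt (fun t => Rmult (f t) (phi t)) (Ropp PI) PI.
Proof.
move=> fc; apply: ex_RInt_continuous => t _.
by apply/continuity_pt_filterlim; apply: continuity_mult.
Qed.

Lemma wmean_ext (f g : R -> R) : (forall t, f t = g t) -> wmean f = wmean g.
Proof. by move=> e; rewrite /wmean; congr Rdiv; apply: RInt_ext => t _; rewrite e. Qed.

Lemma wmeanD (f g : R -> R) : continuity f -> continuity g ->
  wmean (fun t => f t + g t) = wmean f + wmean g.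
Proof.
move=> fc gc; rewrite /wmean (RInt_ext _ (fun t => plus (f t * phi t) (g t * phi t))).
  by rewrite RInt_plus; [exact: Rdiv_plus_distr | exact: ex_RInt_weighted ..].
by move=> t _; rewrite /plus /= !RmultE RplusE mulrDl.
Qed.

Lemma wmeanZ (c : R) (f : R -> R) : continuity f -> wmean (fun t => c * f t) = c * wmean f.
Proof.
move=> fc; rewrite /wmean (RInt_ext _ (fun t => scal c (f t * phi t))).
  by rewrite RInt_scal; [symmetry; apply: Rmult_div_assoc | exact: ex_RInt_weighted].
by move=> t _; rewrite /scal /= /mult /= !RmultE mulrA.
Qed.

Definition cmean (h : R -> R[i]) : R[i] :=
  Complex (wmean (fun t => cRe (h t))) (wmean (fun t => cIm (h t))).

Lemma cmean_ext (h1 h2 : R -> R[i]) : (forall t, h1 t = h2 t) -> cmean h1 = cmean h2.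
Proof. by move=> e; rewrite /cmean; congr Complex; apply: wmean_ext => t; rewrite e. Qed.

Lemma cmeanD (h1 h2 : R -> R[i]) : ccontinuity h1 -> ccontinuity h2 ->
  cmean (fun t => h1 t + h2 t) = cmean h1 + cmean h2.
Proof.
move=> [? ?] [? ?]; rewrite /cmean.
by congr Complex; rewrite -wmeanD //; apply: wmean_ext => t; rewrite (cReD, cImD).
Qed.

Lemma cmeanZ (c : R[i]) (h : R -> R[i]) : ccontinuity h ->
  cmean (fun t => c * h t) = c * cmean h.
Proof.
move=> [? ?]; rewrite /cmean.
rewrite (@wmean_ext _ (fun t => cRe c * cRe (h t) + (- cIm c) * cIm (h t))); last first.
  by move=> t; rewrite cReM mulNr.
rewrite (@wmean_ext (fun t => cIm (c * h t))
    (fun t => cRe c * cIm (h t) + cIm c * cRe (h t))); last first.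
  by move=> t; rewrite cImM.
rewrite !wmeanD ?wmeanZ //; try by apply: continuity_scal.
by case: c => c1 c2 /=; congr Complex; ring.
Qed.

Lemma cmeanJ (h : R -> R[i]) : ccontinuity h -> cmean (fun t => conjc (h t)) = conjc (cmean h).
Proof.
move=> [? ?]; rewrite /cmean /=; congr Complex; first by apply: wmean_ext => t; rewrite cReJ.
by rewrite -mulN1r -wmeanZ //; apply: wmean_ext => t; rewrite cImJ mulN1r.
Qed.

End WeightedMean.

(** * The weighted inner product *)
Definition wdot (phi : R -> R) (P Q : {poly R[i]}) : R[i] :=
  cmean phi (fun t => P.[eit t] * conjc Q.[eit t]).

Definition wnorm2 (phi : R -> R) (P : {poly R[i]}) : R := cRe (wdot phi P P).

Lemma inner_reE (phi : R -> R) (P Q : {poly R[i]}) : inner_re phi P Q = cRe (wdot phi P Q).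
Proof. by apply: wmean_ext => t; rewrite cconjE. Qed.

Lemma inner_imE (phi : R -> R) (P Q : {poly R[i]}) : inner_im phi P Q = cIm (wdot phi P Q).
Proof. by apply: wmean_ext => t; rewrite cconjE. Qed.

Lemma wnormE (phi : R -> R) (P : {poly R[i]}) : wnorm phi P = Num.sqrt (wnorm2 phi P).
Proof. by rewrite /wnorm RsqrtE inner_reE. Qed.

Lemma ccontinuity_dot (P Q : {poly R[i]}) :
  ccontinuity (fun t => P.[eit t] * conjc Q.[eit t]).
Proof. by apply: ccontinuityM; [|apply: ccontinuityJ]; apply: ccontinuity_horner. Qed.

Section InnerProduct.
Variable phi : R -> R.
Hypothesis phi_cont : continuity phi.

Lemma wdotDl (P Q S : {poly R[i]}) : wdot phi (P + Q) S = wdot phi P S + wdot phi Q S.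
Proof.
rewrite /wdot -cmeanD //; try exact: ccontinuity_dot.
by apply: cmean_ext => t; rewrite hornerD mulrDl.
Qed.

Lemma wdotZl (c : R[i]) (P S : {poly R[i]}) : wdot phi (c *: P) S = c * wdot phi P S.
Proof.
rewrite /wdot -cmeanZ //; try exact: ccontinuity_dot.
by apply: cmean_ext => t; rewrite hornerZ mulrA.
Qed.

Lemma wdotC (P Q : {poly R[i]}) : wdot phi Q P = conjc (wdot phi P Q).
Proof.
rewrite /wdot -cmeanJ //; try exact: ccontinuity_dot.
by apply: cmean_ext => t; rewrite rmorphM /= conjcK mulrC.
Qed.

Lemma wdotDr (P Q S : {poly R[i]}) : wdot phi S (P + Q) = wdot phi S P + wdot phi S Q.
Proof. by rewrite (wdotC (P + Q)) wdotDl rmorphD (wdotC P) (wdotC Q). Qed.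

Lemma wdotZr (c : R[i]) (P S : {poly R[i]}) : wdot phi S (c *: P) = conjc c * wdot phi S P.
Proof. by rewrite (wdotC (c *: P)) wdotZl rmorphM (wdotC P). Qed.

Lemma wdotNl (P S : {poly R[i]}) : wdot phi (- P) S = - wdot phi P S.
Proof. by rewrite -scaleN1r wdotZl mulN1r. Qed.

Lemma wdotNr (P S : {poly R[i]}) : wdot phi S (- P) = - wdot phi S P.
Proof. by rewrite -scaleN1r wdotZr rmorphN rmorph1 mulN1r. Qed.

Lemma wdot0l (S : {poly R[i]}) : wdot phi 0 S = 0.
Proof. by rewrite -(scale0r 0) wdotZl mul0r. Qed.

Lemma wdot_suml (N : nat) (F : 'I_N -> {poly R[i]}) (S : {poly R[i]}) :
  wdot phi (\sum_(i < N) F i) S = \sum_(i < N) wdot phi (F i) S.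
Proof. exact: (big_morph (wdot phi ^~ S) (fun P Q => wdotDl P Q S) (wdot0l S)). Qed.

Lemma wdot_sumr (N : nat) (F : 'I_N -> {poly R[i]}) (S : {poly R[i]}) :
  wdot phi S (\sum_(i < N) F i) = \sum_(i < N) wdot phi S (F i).
Proof. by rewrite wdotC wdot_suml rmorph_sum; apply: eq_bigr => i _; rewrite (wdotC _ S). Qed.

Lemma wdotXnM (j : nat) (P Q : {poly R[i]}) : wdot phi ('X^j * P) ('X^j * Q) = wdot phi P Q.
Proof.
apply: cmean_ext => t; rewrite !hornerM hornerXn !rmorphM /= rmorphXn /=.
by rewrite mulrACA -exprMn eit_mulJ expr1n mul1r.
Qed.

Lemma wnorm2D (P Q : {poly R[i]}) :
  wnorm2 phi (P + Q) = wnorm2 phi P + wnorm2 phi Q + 2 * cRe (wdot phi P Q).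
Proof. by rewrite /wnorm2 wdotDl !wdotDr (wdotC P Q) !cReD cReJ; ring. Qed.

Lemma wnorm2N (P : {poly R[i]}) : wnorm2 phi (- P) = wnorm2 phi P.
Proof. by rewrite /wnorm2 wdotNl wdotNr opprK. Qed.

Lemma wnorm2B (P Q : {poly R[i]}) :
  wnorm2 phi (P - Q) = wnorm2 phi P + wnorm2 phi Q - 2 * cRe (wdot phi P Q).
Proof. by rewrite wnorm2D wnorm2N wdotNr; case: (wdot phi P Q) => x y /=; ring. Qed.

Lemma wnorm2Z (c : R) (P : {poly R[i]}) : wnorm2 phi (c%:C *: P) = c ^+ 2 * wnorm2 phi P.
Proof. by rewrite /wnorm2 wdotZl wdotZr conjc_real !cReM /=; ring. Qed.

Lemma wnorm2XnM (j : nat) (P : {poly R[i]}) : wnorm2 phi ('X^j * P) = wnorm2 phi P.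
Proof. by rewrite /wnorm2 wdotXnM. Qed.

End InnerProduct.

(** * Parseval's identity and the Cauchy-Schwarz inequality *)
Section TrigonometricIntegrals.
Local Open Scope R_scope.

Lemma RInt_cos_Z (z : Z) : z <> Z0 -> RInt (fun t => cos (IZR z * t)) (- PI) PI = 0.
Proof.
move=> /not_0_IZR z0; apply: is_RInt_unique.
have -> : 0 = minus (sin (IZR z * PI) / IZR z) (sin (IZR z * - PI) / IZR z).
  rewrite Ropp_mult_distr_r_reverse sin_neg.
  have -> : sin (IZR z * PI) = 0 by apply: sin_eq_0_1; exists z.
  by rewrite Ropp_0 /Rdiv Rmult_0_l minus_eq_zero.
apply: (is_RInt_derive (fun t => sin (IZR z * t) / IZR z)) => t _.
  by auto_derive => //; rewrite Rmult_1_r Rmult_comm -Rmult_assoc Rinv_l // Rmult_1_l.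
by apply/continuous_cos_comp/continuous_mult; [apply: continuous_const | apply: continuous_id].
Qed.

Lemma RInt_sin_Z (z : Z) : z <> Z0 -> RInt (fun t => sin (IZR z * t)) (- PI) PI = 0.
Proof.
move=> /not_0_IZR z0; apply: is_RInt_unique.
have -> : 0 = minus (- cos (IZR z * PI) / IZR z) (- cos (IZR z * - PI) / IZR z).
  by rewrite Ropp_mult_distr_r_reverse cos_neg minus_eq_zero.
apply: (is_RInt_derive (fun t => - cos (IZR z * t) / IZR z)) => t _.
  auto_derive => //; rewrite Rmult_1_r Ropp_mult_distr_r_reverse Ropp_involutive.
  by rewrite Rmult_comm -Rmult_assoc Rinv_l // Rmult_1_l.
by apply/continuous_sin_comp/continuous_mult; [apply: continuous_const | apply: continuous_id].
Qed.

End TrigonometricIntegrals.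

Definition flat_weight : R -> R := fun _ => 1.

Lemma flat_weightE (t : R) : flat_weight t = 1. Proof. by []. Qed.

Lemma continuity_flat_weight : continuity flat_weight.
Proof. by apply: continuity_const. Qed.

Lemma wmean_flat (f : R -> R) : wmean flat_weight f = Rdiv (RInt f (Ropp PI) PI) (Rmult 2 PI).
Proof. by rewrite /wmean; congr Rdiv; apply: RInt_ext => t _; rewrite Rmult_1_r. Qed.

Lemma wmean_flat_cst (c : R) : wmean flat_weight (fun _ => c) = c.
Proof.
have PI2_neq0 : Rmult 2 PI <> 0.
  by apply: Rmult_integral_contrapositive_currified; [discrR | exact: PI_neq0].
rewrite wmean_flat RInt_const /scal /= /mult /= /Rminus Ropp_involutive Rplus_diag.
by rewrite /Rdiv Rmult_comm -Rmult_assoc Rinv_l // Rmult_1_l.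
Qed.

Lemma wdot_flat_Xn (i j : nat) : wdot flat_weight 'X^i 'X^j = (i == j)%:R.
Proof.
rewrite /wdot; have [<-|ij] := eqVneq i j.
  rewrite (@cmean_ext _ _ (fun _ => 1)) => [|t]; last first.
    by rewrite !hornerXn rmorphXn -exprMn eit_mulJ expr1n.
  by rewrite /cmean /= !wmean_flat_cst.
set z := Z.sub (Z.of_nat i) (Z.of_nat j).
have z_neq0 : z <> Z0 by move=> e; move/eqP: ij; apply; lia.
rewrite (@cmean_ext _ _ (fun t => eit (IZR z * t))) => [|t]; last first.
  rewrite !hornerXn !eitX eitJ eitD; congr eit.
  by rewrite minus_IZR -!INR_IZR_INZ !INRE RplusE RminusE !RmultE RoppE; ring.
by rewrite /cmean /= !wmean_flat RInt_cos_Z // RInt_sin_Z // /Rdiv !Rmult_0_l.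
Qed.

Lemma poly_sum_coefXn (P : {poly R[i]}) (N : nat) :
  (size P <= N)%N -> P = \sum_(i < N) P`_i *: 'X^i.
Proof.
move=> PN; rewrite -poly_def; apply/polyP => k; rewrite coef_poly; case: ltnP => // Nk.
by rewrite nth_default // (leq_trans PN Nk).
Qed.

Lemma wdot_flat (P Q : {poly R[i]}) (N : nat) : (size P <= N)%N -> (size Q <= N)%N ->
  wdot flat_weight P Q = \sum_(i < N) P`_i * conjc Q`_i.
Proof.
move=> PN QN; have flat_cont := continuity_flat_weight.
rewrite {1}(poly_sum_coefXn PN) {1}(poly_sum_coefXn QN) wdot_suml //.
apply: eq_bigr => i _; rewrite wdot_sumr // (bigD1 i) //= big1 => [|j ji].
  by rewrite wdotZl // wdotZr // wdot_flat_Xn eqxx mulr1 addr0.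
by rewrite wdotZl // wdotZr // wdot_flat_Xn eq_sym (negbTE ji : (j == i :> nat) = false) !mulr0.
Qed.

Definition sqrnorm (z : R[i]) := cRe z ^+ 2 + cIm z ^+ 2.

Lemma sqrnorm_ge0 (z : R[i]) : 0 <= sqrnorm z.
Proof. by rewrite addr_ge0 ?sqr_ge0. Qed.

Lemma cRe_mulJ (z : R[i]) : cRe (z * conjc z) = sqrnorm z.
Proof. by rewrite cReM cReJ cImJ /sqrnorm; ring. Qed.

Lemma sqrnorm1 : sqrnorm 1 = 1.
Proof. by rewrite /sqrnorm /=; ring. Qed.

Lemma sqrnormMr (z : R[i]) (c : R) : sqrnorm (z * c%:C) = c ^+ 2 * sqrnorm z.
Proof. by rewrite /sqrnorm cReM cImM /=; ring. Qed.

Lemma sqrnormB_le (x y : R[i]) : sqrnorm (x - y) <= 2 * sqrnorm x + 2 * sqrnorm y.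
Proof.
rewrite /sqrnorm cReD cImD; case: x y => [a b] [c d] /=.
rewrite -subr_ge0 (_ : _ - _ = (a + c) ^+ 2 + (b + d) ^+ 2) ?addr_ge0 ?sqr_ge0 //; ring.
Qed.

Lemma wnorm2_flat (P : {poly R[i]}) (N : nat) :
  (size P <= N)%N -> wnorm2 flat_weight P = \sum_(i < N) sqrnorm P`_i.
Proof.
move=> PN; rewrite /wnorm2 (wdot_flat PN PN) (big_morph _ cReD (erefl : cRe 0 = 0)).
by apply: eq_bigr => i _; rewrite cRe_mulJ.
Qed.

Lemma PI_gt0 : 0 < PI :> R.
Proof. exact/RltP/PI_RGT_0. Qed.

Lemma wmean_le (phi psi f g : R -> R) :
  continuity phi -> continuity psi -> continuity f -> continuity g ->
  (forall t, - PI < t < PI -> f t * phi t <= g t * psi t) -> wmean phi f <= wmean psi g.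
Proof.
move=> phic psic fc gc fg; apply/RleP; apply: Rmult_le_compat_r.
  by left; apply/Rinv_0_lt_compat/Rmult_lt_0_compat; [exact: Rlt_0_2 | exact: PI_RGT_0].
apply: RInt_le; try exact: ex_RInt_weighted.
  by apply/RleP; rewrite RoppE; have := PI_gt0; lra.
by move=> t [t1 t2]; apply/RleP/fg; apply/andP; split; apply/RltP.
Qed.

Lemma wnorm2_ge_flat (phi : R -> R) (a : R) (P : {poly R[i]}) : continuity phi ->
  (forall t, - PI < t < PI -> a <= phi t) -> a * wnorm2 flat_weight P <= wnorm2 phi P.
Proof.
move=> phi_cont a_phi; have sq_cont := (ccontinuity_dot P P).1.
rewrite /wnorm2 /wdot /cmean /= -wmeanZ //; last exact: continuity_flat_weight.
apply: wmean_le => //; [exact: continuity_flat_weight | exact: continuity_scal |].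
move=> t tI; rewrite cRe_mulJ flat_weightE mulr1 mulrC.
by apply: ler_wpM2l; [exact: sqrnorm_ge0 | exact: a_phi].
Qed.

Lemma wnorm2_le_flat (phi : R -> R) (b : R) (P : {poly R[i]}) : continuity phi ->
  (forall t, - PI < t < PI -> phi t <= b) -> wnorm2 phi P <= b * wnorm2 flat_weight P.
Proof.
move=> phi_cont phi_b; have sq_cont := (ccontinuity_dot P P).1.
rewrite /wnorm2 /wdot /cmean /= -wmeanZ //; last exact: continuity_flat_weight.
apply: wmean_le => //; [exact: continuity_flat_weight | exact: continuity_scal |].
move=> t tI; rewrite cRe_mulJ flat_weightE mulr1 [b * _]mulrC.
by apply: ler_wpM2l; [exact: sqrnorm_ge0 | exact: phi_b].
Qed.

Lemma quadratic_ge0_sqr_le (F : realFieldType) (A B C : F) : 0 <= C ->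
  (forall t, 0 <= A + 2 * t * B + t ^+ 2 * C) -> B ^+ 2 <= A * C.
Proof.
move=> C_ge0 q_ge0; have [C_gt0|C_le0] := ltrP 0 C.
  have := q_ge0 (- B / C).
  have -> : A + 2 * (- B / C) * B + (- B / C) ^+ 2 * C = (A * C - B ^+ 2) / C.
    by field; rewrite gt_eqF.
  by rewrite pmulr_lge0 ?invr_gt0 // subr_ge0.
have C0 : C = 0 by apply/le_anti/andP.
move: q_ge0; rewrite C0 mulr0 => q_ge0.
have [-> | B_neq0] := eqVneq B 0; first by rewrite expr0n.
have := q_ge0 (- (A + 1) / (2 * B)).
have -> : A + 2 * (- (A + 1) / (2 * B)) * B + (- (A + 1) / (2 * B)) ^+ 2 * 0 = -1.
  by field.
by rewrite ler0N1.
Qed.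

Section CauchySchwarz.
Variable phi : R -> R.
Hypothesis phi_cont : continuity phi.
Hypothesis phi_ge0 : forall t, - PI < t < PI -> 0 <= phi t.

Lemma wnorm2_ge0 (P : {poly R[i]}) : 0 <= wnorm2 phi P.
Proof. by rewrite -(mul0r (wnorm2 flat_weight P)); apply: wnorm2_ge_flat phi_cont phi_ge0. Qed.

Lemma wdot_CauchySchwarz (P Q : {poly R[i]}) :
  cRe (wdot phi P Q) ^+ 2 <= wnorm2 phi P * wnorm2 phi Q.
Proof.
apply: quadratic_ge0_sqr_le (wnorm2_ge0 Q) _ => t.
suff -> : wnorm2 phi P + 2 * t * cRe (wdot phi P Q) + t ^+ 2 * wnorm2 phi Q
  = wnorm2 phi (P + t%:C *: Q) by apply: wnorm2_ge0.
by rewrite wnorm2D // wnorm2Z // wdotZr // conjc_real cReM /=; ring.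
Qed.

Lemma wnorm2_sqrtB_le (F G : {poly R[i]}) :
  (Num.sqrt (wnorm2 phi F) - Num.sqrt (wnorm2 phi G)) ^+ 2 <= wnorm2 phi (F - G).
Proof.
set a := Num.sqrt (wnorm2 phi F); set b := Num.sqrt (wnorm2 phi G).
have a2 : a ^+ 2 = wnorm2 phi F by rewrite sqr_sqrtr // wnorm2_ge0.
have b2 : b ^+ 2 = wnorm2 phi G by rewrite sqr_sqrtr // wnorm2_ge0.
have dot_le : cRe (wdot phi F G) <= a * b.
  apply: le_trans (ler_norm _) _.
  rewrite -ler_sqr ?nnegrE ?mulr_ge0 ?sqrtr_ge0 // real_normK ?num_real //.
  rewrite [(a * b) ^+ 2]exprMn a2 b2.
  exact: wdot_CauchySchwarz.
rewrite wnorm2B // -a2 -b2 (_ : (a - b) ^+ 2 = a ^+ 2 + b ^+ 2 - 2 * (a * b)); first lra.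
by ring.
Qed.

End CauchySchwarz.

Lemma nonincreasing_cauchy (u : nat -> R) :
  (forall n, u n.+1 <= u n) -> (forall n, 0 <= u n) ->
  forall d, 0 < d -> exists N, forall n, (N <= n)%N -> u N - u n <= d.
Proof.
move=> u_decr u_ge0 d d_gt0.
have [l ul] : {l | Un_cv (fun n => - u n) l}.
  apply: growing_cv => [n|]; first by apply/RleP; rewrite lerN2.
  by exists 0 => _ [n ->]; apply/RleP; rewrite oppr_le0.
have /RltP d2_gt0 : 0 < d / 2 by rewrite divr_gt0.
have [N HN] := ul _ d2_gt0.
exists N => n Nn; move: (HN n (elimT ssrnat.leP Nn)) (HN N (le_n N)).
rewrite /Rdist => /Rabs_def2[/RltP n1 /RltP n2] /Rabs_def2[/RltP N1 /RltP N2].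
move: n1 n2 N1 N2; rewrite !RminusE !RoppE; lra.
Qed.

Lemma is_lim_seq_sqr0 (u : nat -> R) :
  is_lim_seq (fun n => u n ^+ 2) (0 : R) -> is_lim_seq u (0 : R).
Proof.
move=> u2; apply/is_lim_seq_abs_0.
apply: (is_lim_seq_ext (fun n => sqrt (u n ^+ 2))) => [n|].
  by rewrite RsqrtE sqrtr_sqr RabsE.
by rewrite -sqrt_0; apply: is_lim_seq_continuous => //; apply/continuity_pt_sqrt/Rle_refl.
Qed.

Lemma is_lim_seq_div_n (c : R) : is_lim_seq (fun n => c / n%:R) (0 : R).
Proof.
apply: (is_lim_seq_ext (fun n => Rmult c (Rinv (INR n)))) => [n|].
  by rewrite INRE RinvE RmultE.
have p_infty_neq0 : p_infty <> Rbar.Finite 0 by [].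
have := is_lim_seq_scal_l _ c _ (is_lim_seq_inv _ _ is_lim_seq_INR p_infty_neq0).
by rewrite /= Rmult_0_r.
Qed.

Lemma ffact_leq_expn (p n i : nat) : (i <= n)%N -> (i ^_ p <= n ^ p)%N.
Proof.
move=> i_le_n; elim: p => [|p IH] //.
by rewrite ffactnSr expnSr leq_mul // (leq_trans (leq_subr _ _) i_le_n).
Qed.

Lemma leq_ffact (p n i : nat) : (i <= n)%N -> (i ^_ p <= n ^_ p)%N.
Proof. by move=> i_le_n; elim: p => [|p IH] //; rewrite !ffactnSr leq_mul // leq_sub2r. Qed.

Lemma ler_ffactB (p n i : nat) : (i <= n)%N ->
  n%:R * ((n ^_ p)%:R - (i ^_ p)%:R) <= p%:R * n%:R ^+ p * (n - i)%:R :> R.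
Proof.
move=> i_le_n; elim: p => [|p IH]; first by rewrite !ffactn0 subrr mulr0 !mul0r.
rewrite !ffactnSr !natrM exprSr.
set x := (n ^_ p)%:R : R; set y := (i ^_ p)%:R : R; set X := n%:R ^+ p : R.
set u := (n - p)%:R : R; set v := (i - p)%:R : R; set d := (n - i)%:R : R.
set N := n%:R : R.
have y_le_X : y <= X by rewrite /X -natrX ler_nat ffact_leq_expn.
have u_le_N : u <= N by rewrite ler_nat leq_subr.
have u_le_vd : u <= v + d by rewrite -natrD ler_nat; lia.
have [y0 u0 v0 d0 N0] : [/\ 0 <= y, 0 <= u, 0 <= v, 0 <= d & 0 <= N] by split; apply: ler0n.
have X0 : 0 <= X by rewrite exprn_ge0 ?ler0n.
have p0 : 0 <= p%:R :> R by apply: ler0n.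
have h1 : N * (x - y) * u <= p%:R * X * d * N.
  apply: le_trans (_ : p%:R * X * d * u <= _); first exact: ler_wpM2r.
  by apply: ler_wpM2l => //; rewrite !mulr_ge0.
have h2 : N * y * (u - v) <= N * X * d.
  rewrite -!mulrA; apply: ler_wpM2l => //.
  by apply: le_trans (_ : y * d <= _); [apply: ler_wpM2l => //; lra | exact: ler_wpM2r].
have -> : N * (x * u - y * v) = N * (x - y) * u + N * y * (u - v) by ring.
rewrite -natr1 mulrDl mul1r; lra.
Qed.

Lemma ler_expn_ffactB (p n : nat) :
  n%:R * (n%:R ^+ p - (n ^_ p)%:R) <= (p ^ 2)%:R * n%:R ^+ p :> R.
Proof.
elim: p => [|p IH]; first by rewrite ffactn0 expr0 subrr mulr0 mul0r.
rewrite ffactnSr natrM exprSr.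
set x := (n ^_ p)%:R : R; set X := n%:R ^+ p : R; set u := (n - p)%:R : R.
set N := n%:R : R.
have x_le_X : x <= X by rewrite /X -natrX ler_nat ffact_leq_expn.
have N_le_up : N <= u + p%:R by rewrite -natrD ler_nat; lia.
have [x0 u0 N0 p0] : [/\ 0 <= x, 0 <= u, 0 <= N & 0 <= p%:R :> R] by split; apply: ler0n.
have X0 : 0 <= X by rewrite exprn_ge0.
have h1 : N * (X - x) * N <= (p ^ 2)%:R * X * N by apply: ler_wpM2r.
have h2 : N * x * (N - u) <= N * X * p%:R.
  rewrite -!mulrA; apply: ler_wpM2l => //.
  by apply: le_trans (_ : x * p%:R <= _); [apply: ler_wpM2l => //; lra | exact: ler_wpM2r].
have -> : N * (X * N - x * u) = N * (X - x) * N + N * x * (N - u) by ring.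
have h3 : 0 <= p%:R * (X * N) + X * N by rewrite addr_ge0 ?mulr_ge0.
have -> : ((p.+1) ^ 2)%:R * (X * N) = (p ^ 2)%:R * X * N + N * X * p%:R + (p%:R * (X * N) + X * N).
  by rewrite !natrX -natr1; ring.
lra.
Qed.

Definition ffact_ratio (p n : nat) : R := ((n ^_ p)%:R / n%:R ^+ p)%R.

Lemma ffact_ratio_bounds (p n : nat) : (0 < n)%N ->
  1 - (p ^ 2)%:R / n%:R <= ffact_ratio p n <= 1.
Proof.
move=> n_gt0; have n_gt0' : 0 < n%:R :> R by rewrite ltr0n.
have nX_gt0 : 0 < n%:R ^+ p :> R by rewrite exprn_gt0.
rewrite /ffact_ratio; apply/andP; split; last first.
  by rewrite ler_pdivrMr // mul1r -natrX ler_nat ffact_leq_expn.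
rewrite -subr_ge0.
have -> : (n ^_ p)%:R / n%:R ^+ p - (1 - (p ^ 2)%:R / n%:R)
    = ((p ^ 2)%:R * n%:R ^+ p - n%:R * (n%:R ^+ p - (n ^_ p)%:R)) / (n%:R * n%:R ^+ p) :> R.
  by field; rewrite !gt_eqF.
apply: divr_ge0; last by rewrite mulr_ge0 ?ltW.
by rewrite subr_ge0 ler_expn_ffactB.
Qed.

Lemma ffact_ratio_cvg (p : nat) : is_lim_seq (ffact_ratio p) (1 : R).
Proof.
apply: (is_lim_seq_le_le_loc (fun n => 1 - (p ^ 2)%:R / n%:R) _ (fun _ => 1)).
- exists 1%N => n /ssrnat.leP n_gt0.
  by case/andP: (ffact_ratio_bounds p n_gt0) => /RleP ? /RleP.
- by rewrite -[1 : R]Rminus_0_r; apply: is_lim_seq_minus' (is_lim_seq_const _) (is_lim_seq_div_n _).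
- exact: is_lim_seq_const.
Qed.

(** * The coefficient spread *)
Lemma size_XnM_le (P : {poly R[i]}) (m k : nat) :
  (size P <= m)%N -> (size ('X^k * P)%R <= m + k)%N.
Proof.
move=> Pm; apply/leq_sizeP => j jmk; rewrite coefXnM.
by case: ltnP => // kj; rewrite nth_default //; apply: leq_trans Pm _; lia.
Qed.

Definition spread (n : nat) (P : {poly R[i]}) :=
  \sum_(i < n.+1) (n - i)%:R ^+ 2 * sqrnorm P`_i.

Lemma spread_ge0 (n : nat) (P : {poly R[i]}) : 0 <= spread n P.
Proof. by apply: sumr_ge0 => i _; rewrite mulr_ge0 ?sqr_ge0 ?sqrnorm_ge0. Qed.

Lemma spread_le_flat (n : nat) (P : {poly R[i]}) :
  (size P <= n.+1)%N -> spread n P <= n%:R ^+ 2 * wnorm2 flat_weight P.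
Proof.
move=> Pn; rewrite (wnorm2_flat Pn) mulr_sumr; apply: ler_sum => i _.
by apply: ler_wpM2r; [exact: sqrnorm_ge0 | rewrite -!natrX ler_nat leq_exp2r // leq_subr].
Qed.

Lemma spread_XnM (N n : nat) (P : {poly R[i]}) : (N <= n)%N -> (size P <= N.+1)%N ->
  spread n ('X^(n - N) * P) <= N%:R ^+ 2 * wnorm2 flat_weight P.
Proof.
move=> Nn PN; have := size_XnM_le (n - N) PN; rewrite addSn subnKC // => sizeXP.
rewrite -(wnorm2XnM _ (n - N)) (wnorm2_flat sizeXP) mulr_sumr.
apply: ler_sum => i _; rewrite coefXnM; case: ltnP => i_ge.
  by rewrite /sqrnorm /= expr0n addr0 !mulr0.
by apply: ler_wpM2r; [exact: sqrnorm_ge0 | rewrite -!natrX ler_nat leq_exp2r // leq_subCl].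
Qed.

Lemma spreadB (n : nat) (P Q : {poly R[i]}) :
  spread n (P - Q) <= 2 * spread n P + 2 * spread n Q.
Proof.
rewrite /spread !mulr_sumr -big_split /=; apply: ler_sum => i _.
rewrite coefB [2 * (_ * sqrnorm P`_i)]mulrCA [2 * (_ * sqrnorm Q`_i)]mulrCA -mulrDr.
apply: ler_wpM2l; first exact: sqr_ge0.
exact: sqrnormB_le.
Qed.

Lemma coef_XnM_derivn (p : nat) (P : {poly R[i]}) (i : nat) :
  ('X^p * derivn p P)`_i = P`_i *+ i ^_ p.
Proof.
rewrite coefXnM coef_derivn; case: ltnP => ip; first by rewrite ffact_small // mulr0n.
by rewrite subnKC.
Qed.

Definition derivn_defect (p n : nat) (P : {poly R[i]}) :=
  'X^p * derivn p P - (n ^_ p)%:R%:C *: P.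

Lemma coef_derivn_defect (p n : nat) (P : {poly R[i]}) (i : nat) :
  (derivn_defect p n P)`_i = P`_i * ((i ^_ p)%:R - (n ^_ p)%:R)%:C.
Proof.
rewrite coefB coef_XnM_derivn coefZ rmorphB /= mulrBr [_%:C * _]mulrC; congr (_ - _).
by rewrite -[LHS]mulr_natr -[((i ^_ p)%:R : R[i])](rmorph_nat (real_complex R)).
Qed.

Lemma derivn_defect_flat_le (p n : nat) (P : {poly R[i]}) : (size P <= n.+1)%N ->
  n%:R ^+ 2 * wnorm2 flat_weight (derivn_defect p n P) <= p%:R ^+ 2 * (n%:R ^+ p) ^+ 2 * spread n P.
Proof.
move=> Pn; have size_E : (size (derivn_defect p n P) <= n.+1)%N.
  by apply/leq_sizeP => j nj; rewrite coef_derivn_defect nth_default ?mul0r // (leq_trans Pn).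
rewrite (wnorm2_flat size_E) /spread !mulr_sumr; apply: ler_sum => i _.
have i_le_n : (i <= n)%N by rewrite -ltnS.
set d : R := (n ^_ p)%:R - (i ^_ p)%:R.
have nd_ge0 : 0 <= n%:R * d by rewrite mulr_ge0 ?ler0n // subr_ge0 ler_nat leq_ffact.
rewrite coef_derivn_defect sqrnormMr mulrA [X in _ <= X]mulrA -!exprMn.
rewrite -opprB -/d mulrN sqrrN.
apply: ler_wpM2r; first exact: sqrnorm_ge0.
by rewrite !expr2; apply: ler_pM => //; apply: ler_ffactB.
Qed.

(** * Monic orthogonal polynomials *)
Section MonicOrthogonalPolynomials.
Variables (w : R -> R) (a b : R) (pi_ : nat -> {poly R[i]}).
Hypothesis w_cont : continuity w.
Hypothesis a_gt0 : 0 < a.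
Hypothesis w_bounds : forall t, - PI < t < PI -> a <= w t <= b.
Hypothesis pi_OP : forall n, monic_OP w n (pi_ n).

Let w_ge_a t (tI : - PI < t < PI) : a <= w t := (andP (w_bounds tI)).1.
Let w_le_b t (tI : - PI < t < PI) : w t <= b := (andP (w_bounds tI)).2.
Let w_ge0 t (tI : - PI < t < PI) : 0 <= w t := le_trans (ltW a_gt0) (w_ge_a tI).

Lemma size_pi (n : nat) : size (pi_ n) = n.+1.
Proof. by case: (pi_OP n) => _ []. Qed.

Lemma coef_pi_top (n : nat) : (pi_ n)`_n = 1.
Proof. by case: (pi_OP n) => /monicP; rewrite lead_coefE size_pi. Qed.

Lemma coef_pi_gt (n j : nat) : (n < j)%N -> (pi_ n)`_j = 0.
Proof. by move=> nj; rewrite nth_default // size_pi. Qed.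

Lemma wdot_pi_orth (n : nat) (Q : {poly R[i]}) : (size Q <= n)%N -> wdot w (pi_ n) Q = 0.
Proof.
case: (pi_OP n) => _ [_ orth] /orth[re im].
by apply/eqP; rewrite eq_complex -inner_reE -inner_imE re im eqxx.
Qed.

Definition pi_norm2 (n : nat) := wnorm2 w (pi_ n).

Lemma pi_norm2_ge (n : nat) : a <= pi_norm2 n.
Proof.
apply: le_trans (wnorm2_ge_flat _ w_cont w_ge_a); rewrite -[X in X <= _]mulr1.
apply: ler_wpM2l; first exact: ltW.
rewrite (@wnorm2_flat _ n.+1) ?size_pi // big_ord_recr /= coef_pi_top sqrnorm1 lerDr.
by apply: sumr_ge0 => i _; apply: sqrnorm_ge0.
Qed.

Definition pi_defect (m n : nat) := 'X^(n - m) * pi_ m - pi_ n.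

Lemma size_pi_defect (m n : nat) : (m <= n)%N -> (size (pi_defect m n) <= n)%N.
Proof.
move=> mn; apply/leq_sizeP => j nj; rewrite coefB coefXnM.
have -> : (j < n - m)%N = false by apply/negbTE; rewrite -leqNgt; lia.
move: nj; rewrite leq_eqVlt => /orP[/eqP <-|n_lt_j].
  by rewrite subKn // !coef_pi_top subrr.
by rewrite !coef_pi_gt ?subrr //; lia.
Qed.

Lemma pi_norm2_defect (m n : nat) :
  (m <= n)%N -> pi_norm2 m = pi_norm2 n + wnorm2 w (pi_defect m n).
Proof.
move=> mn; rewrite /pi_norm2 -(wnorm2XnM _ (n - m)) (_ : _ * _ = pi_ n + pi_defect m n).
  by rewrite wnorm2D // wdot_pi_orth ?size_pi_defect // mulr0 addr0.
by rewrite /pi_defect addrC subrK.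
Qed.

Lemma pi_norm2_cauchy (d : R) : 0 < d ->
  exists N, forall n, (N <= n)%N -> pi_norm2 N - pi_norm2 n <= d.
Proof.
apply: nonincreasing_cauchy => [n|n]; last exact: wnorm2_ge0.
by rewrite (pi_norm2_defect (leqnSn n)) lerDl wnorm2_ge0.
Qed.

Lemma spread_pi_le (N n : nat) : (N <= n)%N ->
  a * spread n (pi_ n)
  <= 2 * (N%:R ^+ 2 * pi_norm2 N) + 2 * (n%:R ^+ 2 * (pi_norm2 N - pi_norm2 n)).
Proof.
move=> Nn; set D := pi_defect N n.
have -> : pi_ n = 'X^(n - N) * pi_ N - D by rewrite /D /pi_defect opprB addrC subrK.
have shift_le : a * spread n ('X^(n - N) * pi_ N) <= N%:R ^+ 2 * pi_norm2 N.
  apply: le_trans (ler_wpM2l (ltW a_gt0) (spread_XnM Nn (eq_leq (size_pi N)))) _.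
  by rewrite mulrCA ler_wpM2l ?sqr_ge0 // wnorm2_ge_flat.
have defect_le : a * spread n D <= n%:R ^+ 2 * (pi_norm2 N - pi_norm2 n).
  have sizeD : (size D <= n.+1)%N := leq_trans (size_pi_defect Nn) (leqnSn n).
  apply: le_trans (ler_wpM2l (ltW a_gt0) (spread_le_flat sizeD)) _.
  rewrite mulrCA ler_wpM2l ?sqr_ge0 // (pi_norm2_defect Nn) [_ + wnorm2 _ _]addrC addrK.
  exact: wnorm2_ge_flat.
apply: le_trans (ler_wpM2l (ltW a_gt0) (spreadB _ _ _)) _.
by rewrite mulrDr (mulrCA a 2) (mulrCA a 2) lerD // ler_wpM2l.
Qed.

Lemma spread_pi_o : is_lim_seq (fun n => spread n (pi_ n) / n%:R ^+ 2) (0 : R).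
Proof.
apply/is_lim_seq_spec => eps; have /RltP e_gt0 := cond_pos eps; set e := pos eps in e_gt0 *.
(* With N chosen so that pi_norm2 N - pi_norm2 n <= a e / 8, [spread_pi_le] gives
   spread n <= K + n^2 e / 4, and K < n^2 e / 4 as soon as n > 4 K / e. *)
have [N HN] := pi_norm2_cauchy (mulr_gt0 a_gt0 (divr_gt0 e_gt0 (ltr0n _ 8))).
set K := 2 * (N%:R ^+ 2 * pi_norm2 N) / a.
have K_ge0 : 0 <= K.
  apply: divr_ge0 (ltW a_gt0); apply: mulr_ge0 => //; apply: mulr_ge0; first exact: sqr_ge0.
  exact: le_trans (ltW a_gt0) (pi_norm2_ge N).
have [M M_gt] : exists M : nat, 4 * K / e < M%:R.
  exists (Num.Def.archi_bound (4 * K / e)); apply: archi_boundP.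
  by apply: divr_ge0 (ltW e_gt0); apply: mulr_ge0.
exists (maxn (maxn N M) 1) => n /ssrnat.leP; rewrite !geq_max => /andP[/andP[Nn Mn] n_gt0].
have n_ge1 : 1 <= n%:R :> R by rewrite ler1n.
have n2_gt0 : 0 < n%:R ^+ 2 :> R by rewrite exprn_gt0 // (lt_le_trans ltr01).
apply/RltP; rewrite RminusE subr0 RabsE ger0_norm; last first.
  exact: divr_ge0 (spread_ge0 _ _) (ltW n2_gt0).
rewrite ltr_pdivrMr //.
have spread_le : spread n (pi_ n) <= K + n%:R ^+ 2 * (e / 4).
  rewrite -(ler_pM2l a_gt0) mulrDr /K mulrCA divff ?gt_eqF // mulr1.
  apply: le_trans (spread_pi_le Nn) _; rewrite lerD2l.
  rewrite [X in _ <= X](_ : _ = 2 * (n%:R ^+ 2 * (a * (e / 8)))); last by field.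
  by rewrite ler_wpM2l // ler_wpM2l ?sqr_ge0 // HN.
have K_lt : K < n%:R ^+ 2 * (e / 4).
  apply: lt_le_trans (_ : n%:R * (e / 4) <= _); last first.
    apply: ler_wpM2r; first by rewrite divr_ge0 ?ltW.
    by rewrite expr2; apply: ler_peMr => //; apply: le_trans ler01 n_ge1.
  rewrite -ltr_pdivrMr ?divr_gt0 // invf_div mulrC mulrAC.
  by rewrite (lt_le_trans M_gt) // ler_nat.
have quarter_gt0 : 0 < n%:R ^+ 2 * (e / 4) by rewrite mulr_gt0 ?divr_gt0.
rewrite (_ : e * n%:R ^+ 2 = 4 * (n%:R ^+ 2 * (e / 4))); last by field.
lra.
Qed.

Definition derivn_norm_ratio (p n : nat) :=
  Num.sqrt (wnorm2 w (derivn p (pi_ n))) / (n%:R ^+ p * Num.sqrt (pi_norm2 n)).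

Lemma derivn_norm_ratioE (p n : nat) :
  Rmult (Rinv (pow (INR n) p)) (Rdiv (wnorm w (derivn p (pi_ n))) (wnorm w (pi_ n)))
  = derivn_norm_ratio p n.
Proof. by rewrite RmultE RinvE RpowE INRE RdivE !wnormE /derivn_norm_ratio invfM mulrCA. Qed.

Lemma derivn_norm_ratio_sub_le (p n : nat) : (0 < n)%N ->
  (derivn_norm_ratio p n - ffact_ratio p n) ^+ 2
  <= b * p%:R ^+ 2 / a * (spread n (pi_ n) / n%:R ^+ 2).
Proof.
move=> n_gt0; have n_gt0' : 0 < n%:R :> R by rewrite ltr0n.
have X_gt0 : 0 < n%:R ^+ p :> R by rewrite exprn_gt0.
have mu_gt0 : 0 < pi_norm2 n := lt_le_trans a_gt0 (pi_norm2_ge n).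
have b_ge0 : 0 <= b.
  have I0 : - PI < 0 < PI by rewrite oppr_lt0 PI_gt0.
  exact: le_trans (w_ge0 I0) (w_le_b I0).
set F := 'X^p * derivn p (pi_ n); set G := (n ^_ p)%:R%:C *: pi_ n.
have sqrtG : Num.sqrt (wnorm2 w G) = (n ^_ p)%:R * Num.sqrt (pi_norm2 n).
  by rewrite wnorm2Z // sqrtrM ?sqr_ge0 // sqrtr_sqr ger0_norm.
have FG_le : (Num.sqrt (wnorm2 w F) - Num.sqrt (wnorm2 w G)) ^+ 2
    <= b * (p%:R ^+ 2 * (n%:R ^+ p) ^+ 2 * (spread n (pi_ n) / n%:R ^+ 2)).
  apply: le_trans (wnorm2_sqrtB_le w_cont w_ge0 F G) _.
  apply: le_trans (wnorm2_le_flat _ w_cont w_le_b) _; apply: ler_wpM2l => //.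
  rewrite mulrA ler_pdivlMr ?exprn_gt0 // mulrC.
  by apply: derivn_defect_flat_le; rewrite size_pi.
rewrite /derivn_norm_ratio /ffact_ratio -(wnorm2XnM _ p) -/F.
have -> : (Num.sqrt (wnorm2 w F) / (n%:R ^+ p * Num.sqrt (pi_norm2 n))
            - (n ^_ p)%:R / n%:R ^+ p) ^+ 2
    = (Num.sqrt (wnorm2 w F) - Num.sqrt (wnorm2 w G)) ^+ 2 / ((n%:R ^+ p) ^+ 2 * pi_norm2 n).
  have sqrt_mu_gt0 : 0 < Num.sqrt (pi_norm2 n) by rewrite sqrtr_gt0.
  rewrite sqrtG -{3}(sqr_sqrtr (ltW mu_gt0)).
  by field; rewrite !gt_eqF.
rewrite ler_pdivrMr; last by rewrite mulr_gt0 ?exprn_gt0.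
apply: le_trans FG_le _.
rewrite (_ : b * (_ * _)
    = b * p%:R ^+ 2 / a * (spread n (pi_ n) / n%:R ^+ 2) * ((n%:R ^+ p) ^+ 2 * a)).
  apply: ler_wpM2l; last by rewrite ler_wpM2l ?sqr_ge0 // pi_norm2_ge.
  apply: mulr_ge0; last exact: divr_ge0 (spread_ge0 _ _) (sqr_ge0 _).
  exact: divr_ge0 (mulr_ge0 b_ge0 (sqr_ge0 _)) (ltW a_gt0).
by field; rewrite !gt_eqF.
Qed.

Lemma derivn_norm_ratio_cvg (p : nat) : is_lim_seq (derivn_norm_ratio p) (1 : R).
Proof.
have sub_cvg0 : is_lim_seq (fun n => derivn_norm_ratio p n - ffact_ratio p n) (0 : R).
  apply: is_lim_seq_sqr0.
  apply: (is_lim_seq_le_le_loc (fun _ => 0) _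
    (fun n => b * p%:R ^+ 2 / a * (spread n (pi_ n) / n%:R ^+ 2))).
  - exists 1%N => n /ssrnat.leP n_gt0; split; apply/RleP; first exact: sqr_ge0.
    exact: derivn_norm_ratio_sub_le.
  - exact: is_lim_seq_const.
  - by have := is_lim_seq_scal_l _ (b * p%:R ^+ 2 / a) _ spread_pi_o; rewrite /= Rmult_0_r.
have := is_lim_seq_plus' _ _ _ _ sub_cvg0 (ffact_ratio_cvg p).
by rewrite Rplus_0_l; apply: is_lim_seq_ext => n; rewrite RplusE subrK.
Qed.

End MonicOrthogonalPolynomials.

(** * The weight exp (- V) *)
Lemma lipschitz_continuity (f : R -> R) (L : R) :
  (forall x y, Rle (Rabs (Rminus (f x) (f y))) (Rmult L (Rabs (Rminus x y)))) -> continuity f.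
Proof.
move=> f_lip x eps /RltP eps_gt0; have L1_gt0 : 0 < `|L| + 1 by rewrite ltr_wpDl.
exists (eps / (`|L| + 1)); split; first by apply/RltP; rewrite divr_gt0.
move=> y [_ /RltP]; move/RleP: (f_lip y x); rewrite /= /R_dist !RabsE !RminusE RmultE.
move=> fyx yx; apply/RltP; apply: le_lt_trans fyx _.
apply: le_lt_trans (ler_wpM2r (normr_ge0 _) (ler_norm L)) _.
apply: le_lt_trans (ler_wpM2l (normr_ge0 L) (ltW yx)) _.
by rewrite mulrA ltr_pdivrMr // mulrC mulrDr mulr1 ltrDl.
Qed.

Lemma C_lip_periodic_continuity (k : nat) (V : R -> R) :
  (0 < k)%N -> C_lip_periodic k V -> continuity V.
Proof.
case: k => [//|[|k]] _ [_ [V_der [L V_lip]]]; first exact: (lipschitz_continuity V_lip).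
by move=> x; apply/continuity_pt_filterlim/ex_derive_continuous; apply: (V_der 1%N x).
Qed.

Lemma continuity_exp_opp (V : R -> R) : continuity V -> continuity (fun t => exp (- V t)).
Proof.
move=> V_cont; apply: (continuity_comp (fun t => - V t) exp).
  exact: continuity_opp.
exact: derivable_continuous derivable_exp.
Qed.

Lemma exp_opp_bounds (V : R -> R) : continuity V ->
  exists a b : R, 0 < a /\ forall t, - PI < t < PI -> a <= exp (- V t) <= b.
Proof.
move=> V_cont; have PI_bounds : Rle (- PI) PI by apply/RleP; rewrite RoppE; have := PI_gt0; lra.
have [tM [V_le _]] := continuity_ab_maj V _ _ PI_bounds (fun t _ => V_cont t).
have [tm [V_ge _]] := continuity_ab_min V _ _ PI_bounds (fun t _ => V_cont t).
have exp_le x y : Rle x y -> Rle (exp x) (exp y).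
  by case=> [/exp_increasing/Rlt_le|->] //; apply: Rle_refl.
exists (exp (- V tM)), (exp (- V tm)); split; first exact/RltP/exp_pos.
move=> t /andP[/RltP/Rlt_le t1 /RltP/Rlt_le t2]; apply/andP; split; apply/RleP; apply: exp_le.
  exact/Ropp_le_contravar/V_le.
exact/Ropp_le_contravar/V_ge.
Qed.

Theorem corollary3p3 (p k : nat) (V : R -> R) (pi_ : nat -> {poly R[i]}) :
  (2 * p + 1 <= k)%N ->
  C_lip_periodic k V ->
  (forall n, monic_OP (fun t => exp (Ropp (V t))) n (pi_ n)) ->
  is_lim_seq
    (fun n : nat => Rmult (Rinv (pow (INR n) p))
       (Rdiv (wnorm (fun t => exp (Ropp (V t))) (derivn p (pi_ n)))
             (wnorm (fun t => exp (Ropp (V t))) (pi_ n))))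
    (Rbar.Finite R1).
Proof.
move=> k_ge V_reg pi_OP.
have V_cont : continuity V.
  by apply: C_lip_periodic_continuity V_reg; rewrite (leq_trans _ k_ge) ?addn1.
have [a [b [a_gt0 w_bounds]]] := exp_opp_bounds V_cont.
have := derivn_norm_ratio_cvg (continuity_exp_opp V_cont) a_gt0 w_bounds pi_OP p.
by apply: is_lim_seq_ext => n; rewrite derivn_norm_ratioE.
Qed.
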